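(* Let $A$ be an arena and $\sigma$ a view function on $A$. Then its view closure $\overline{\sigma}$ is a strategy on $A$ (a non-empty set of even-length plays, closed under even-length prefixes, deterministic and uniform).
   Context: First-order variables are split into three disjoint countable sets: $\mathcal A$-variables, $\mathcal O$-variables (with a fixed enumeration $(o_i)_{i\in\mathbb N}$) and $\mathcal P$-variables. $\mathcal{AP}$-terms (resp. $\mathcal{OP}$-terms) are first-order terms built from $\mathcal A$- and $\mathcal P$-variables (resp. $\mathcal O$- and $\mathcal P$-variables). Arena: a finite forest whose nodes (moves) carry a first-order label (a list of $\mathcal A$-variables, all such variables in the arena being distinct) and an atomic label (a list of atomic formulas $X\,t_1\dots t_k$ whose $t_i$ are $\mathcal{AP}$-terms whose $\mathcal A$-variables occur in the first-order label of the node or of an ancestor). Polarity is depth parity: even = Opponent (O), odd = Player (P); roots are initial. Justified sequence: finite sequence of move occurrences; each non-initial occurrence has a $\lambda$-pointer to an earlier occurrence of its father; each element of the atomic label of an occurrence has at most one $\mu$-pointer to an element of the atomic label of an earlier occurrence of opposite polarity. Instantiations: each O-move occurrence carries an $\mathcal O$-instantiation (list of $\mathcal O$-variables of the length of its first-order label), each P-move occurrence a $\mathcal P$-instantiation (list of $\mathcal{OP}$-terms of that length); all $\mathcal O$-variables in $\mathcal O$-instantiations are distinct. For an occurrence $m$ with instantiation $[t_1..t_k]$ and first-order label $[x_1..x_k]$, $\theta_m=\{x_i\mapsto t_i\}$ if $m$ is initial, else $\theta_m=\theta_n\cup\{x_i\mapsto t_i\}$ with $n$ its $\lambda$-justifier.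 Play: an instantiated justified sequence with alternating polarities, no $\mu$-pointers from O-moves, exactly one $\mu$-pointer from each element of the atomic label of each P-move, every $\mu$-pointer from $X\,t_1..t_k$ at $m$ to $Y\,u_1..u_p$ at $n$ satisfying $X=Y$, $k=p$, $t_i\theta_m=u_i\theta_n$, and every $\mathcal O$-variable occurring in a $\mathcal P$-instantiation occurring in an earlier $\mathcal O$-instantiation. An $\mathcal O$-renaming is an injection $\varsigma$ of $\mathcal O$-variables into themselves; $s\varsigma$ replaces each $o$ by $\varsigma(o)$ in all instantiations. Strategy: non-empty set of even-length plays closed under even-length prefixes, deterministic ($sm,sn\in\sigma\Rightarrow sm=sn$, including pointers and instantiations) and uniform ($s\in\sigma\Rightarrow s\varsigma\in\sigma$ for every $\mathcal O$-renaming). View: a play in which each O-move occurrence other than the first is $\lambda$-justified by the immediately preceding move, and the concatenation (in order) of its $\mathcal O$-instantiations is a prefix of $(o_i)$. Pre-view: $\lceil\varepsilon\rceil=\varepsilon$; $\lceil sm\rceil=\lceil s\rceil m$ for P-moves $m$; $\lceil sm\rceil=m$ for initial $m$; $\lceil sm\,t\,n\rceil=\lceil sm\rceil n$ for an O-move $n$ justified by $m$. The view $\ulcorner s\urcorner$ is $\lceil s\rceil\varsigma$ where $\varsigma$ is an $\mathcal O$-renaming sending the $i$-th $\mathcal O$-variable played in $\lceil s\rceil$ to $o_i$. View function: non-empty set of even-length views closed under even-length prefixes and deterministic. View closure $\overline\sigma$: least set with $\varepsilon\in\overline\sigma$ and, if $s\in\overline\sigma$, $smn$ is a play and $\ulcorner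 smn\urcorner\in\sigma$, then $smn\in\overline\sigma$. *)

From Stdlib Require Import List Arith Bool.
Import ListNotations.

(** Variables: A-variables, O-variables (o_i is [VO i]), P-variables. *)
Inductive var := VA (x : nat) | VO (x : nat) | VP (x : nat).

Inductive term := Var (v : var) | App (f : nat) (args : list term).

Record atom := mkAtom { a_pred : nat; a_args : list term }.

Fixpoint fvars (t : term) : list var :=
  match t with
  | Var v => [v]
  | App _ l => flat_map fvars l
  end.

Definition AP_term (t : term) : Prop :=
  forall v, In v (fvars t) -> match v with VO _ => False | _ => True end.
Definition OP_term (t : term) : Prop :=
  forall v, In v (fvars t) -> match v with VA _ => False | _ => True end.

Fixpoint lookup (x : nat) (th : list (nat * term)) : option term :=
  match th with
  | [] => None
  | (y, u) :: r => if Nat.eqb x y then Some u else lookup x r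
  end.

Fixpoint subst (th : list (nat * term)) (t : term) : term :=
  match t with
  | Var (VA x) => match lookup x th with Some u => u | None => t end
  | Var _ => t
  | App f l => App f (map (subst th) l)
  end.

Fixpoint ren_term (r : nat -> nat) (t : term) : term :=
  match t with
  | Var (VO k) => Var (VO (r k))
  | Var v => Var v
  | App f l => App f (map (ren_term r) l)
  end.

(** Moves are [0 .. n_moves-1]; [parent m = None] for roots.  The forest
    structure is enforced in [wf_arena] by requiring parents to have smaller
    index (every finite forest can be so numbered). *)
Record arena := mkArena {
  n_moves : nat;
  parent : nat -> option nat;
  fo_label : nat -> list nat;     (* list of A-variables (indices) *)
  at_label : nat -> list atom }.

Inductive anc_or_self (A : arena) : nat -> nat -> Prop :=
| anc_refl m : anc_or_self A m m
| anc_up a m p : parent A m = Some p -> anc_or_self A a p -> anc_or_self A a m.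

Definition wf_arena (A : arena) : Prop :=
  (forall m p, m < n_moves A -> parent A m = Some p -> p < m) /\
  NoDup (flat_map (fo_label A) (seq 0 (n_moves A))) /\
  (forall m a t, m < n_moves A -> In a (at_label A m) -> In t (a_args a) ->
     AP_term t /\
     forall x, In (VA x) (fvars t) ->
       exists n, anc_or_self A n m /\ In x (fo_label A n)).

Fixpoint depth_f (A : arena) (fuel m : nat) : nat :=
  match fuel with
  | 0 => 0
  | S f => match parent A m with None => 0 | Some p => S (depth_f A f p) end
  end.
Definition depth (A : arena) (m : nat) : nat := depth_f A (S m) m.

Definition is_O (A : arena) (m : nat) : bool := Nat.even (depth A m).

(** Pointers are absolute positions (0-based) in the
    sequence: [o_just] is the lambda-pointer, [o_mu] has one entry per element
    of the atomic label (None = no mu-pointer; Some (j,l) = pointer to the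
    l-th atom of the occurrence at position j), [o_inst] the instantiation. *)
Record occ := mkOcc {
  o_move : nat;
  o_just : option nat;
  o_mu : list (option (nat * nat));
  o_inst : list term }.

Definition dummy_occ : occ := mkOcc 0 None [] [].

Definition ovars_inst (l : list term) : list nat :=
  flat_map (fun t => match t with Var (VO k) => [k] | _ => [] end) l.

Definition O_ovars (A : arena) (s : list occ) : list nat :=
  flat_map (fun o => if is_O A (o_move o) then ovars_inst (o_inst o) else []) s.

Definition jseq (A : arena) (s : list occ) : Prop :=
  (forall i o, nth_error s i = Some o ->
    o_move o < n_moves A /\
    match parent A (o_move o) with
    | None => o_just o = None
    | Some p => exists j o', o_just o = Some j /\ j < i /\
                  nth_error s j = Some o' /\ o_move o' = p
    end /\
    length (o_mu o) = length (at_label A (o_move o)) /\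
    (forall k j l, nth_error (o_mu o) k = Some (Some (j, l)) ->
       j < i /\ exists o', nth_error s j = Some o' /\
         is_O A (o_move o') <> is_O A (o_move o) /\
         l < length (at_label A (o_move o'))) /\
    length (o_inst o) = length (fo_label A (o_move o)) /\
    (if is_O A (o_move o)
     then forall t, In t (o_inst o) -> exists k, t = Var (VO k)
     else forall t, In t (o_inst o) -> OP_term t)) /\
  NoDup (O_ovars A s).

Fixpoint theta_f (A : arena) (s : list occ) (fuel i : nat) : list (nat * term) :=
  match fuel with
  | 0 => []
  | S f =>
    match nth_error s i with
    | None => []
    | Some o =>
      combine (fo_label A (o_move o)) (o_inst o) ++
      match o_just o with None => [] | Some j => theta_f A s f j end
    end
  end.
Definition theta (A : arena) (s : list occ) (i : nat) := theta_f A s (S i) i.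

Definition play (A : arena) (s : list occ) : Prop :=
  jseq A s /\
  (forall i o o', nth_error s i = Some o -> nth_error s (S i) = Some o' ->
     is_O A (o_move o) <> is_O A (o_move o')) /\
  (forall i o, nth_error s i = Some o -> is_O A (o_move o) = true ->
     forall x, In x (o_mu o) -> x = None) /\
  (forall i o, nth_error s i = Some o -> is_O A (o_move o) = false ->
     forall x, In x (o_mu o) -> x <> None) /\
  (forall i o k j l o' a b, nth_error s i = Some o ->
     nth_error (o_mu o) k = Some (Some (j, l)) -> nth_error s j = Some o' ->
     nth_error (at_label A (o_move o)) k = Some a ->
     nth_error (at_label A (o_move o')) l = Some b ->
     a_pred a = a_pred b /\
     map (subst (theta A s i)) (a_args a) = map (subst (theta A s j)) (a_args b)) /\
  (forall i o t x, nth_error s i = Some o -> is_O A (o_move o) = false ->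
     In t (o_inst o) -> In (VO x) (fvars t) ->
     exists j o', j < i /\ nth_error s j = Some o' /\
       is_O A (o_move o') = true /\ In x (ovars_inst (o_inst o'))).

Definition O_renaming (r : nat -> nat) : Prop := forall x y, r x = r y -> x = y.

Definition ren_occ (r : nat -> nat) (o : occ) : occ :=
  mkOcc (o_move o) (o_just o) (o_mu o) (map (ren_term r) (o_inst o)).
Definition ren_seq (r : nat -> nat) (s : list occ) : list occ := map (ren_occ r) s.

Definition strategy (A : arena) (S : list occ -> Prop) : Prop :=
  (exists s, S s) /\
  (forall s, S s -> play A s /\ Nat.even (length s) = true) /\
  (forall s t, S (s ++ t) -> Nat.even (length s) = true -> S s) /\
  (forall s m n, S (s ++ [m]) -> S (s ++ [n]) -> m = n) /\
  (forall s r, O_renaming r -> S s -> S (ren_seq r s)).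

Definition is_view (A : arena) (s : list occ) : Prop :=
  play A s /\
  (forall i o, nth_error s i = Some o -> is_O A (o_move o) = true -> i <> 0 ->
     o_just o = Some (pred i)) /\
  O_ovars A s = seq 0 (length (O_ovars A s)).

Definition view_function (A : arena) (S : list occ -> Prop) : Prop :=
  (exists s, S s) /\
  (forall s, S s -> is_view A s /\ Nat.even (length s) = true) /\
  (forall s t, S (s ++ t) -> Nat.even (length s) = true -> S s) /\
  (forall s m n, S (s ++ [m]) -> S (s ++ [n]) -> m = n).

(** Pre-view: positions (in [s]) of the occurrences kept in the pre-view of
    the prefix of length [k] of [s]. *)
Fixpoint pv_idx (A : arena) (s : list occ) (fuel k : nat) : list nat :=
  match fuel with
  | 0 => []
  | S f =>
    match k with
    | 0 => []
    | S k' =>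
      match nth_error s k' with
      | None => []
      | Some o =>
        if negb (is_O A (o_move o)) then pv_idx A s f k' ++ [k']
        else match o_just o with
             | None => [k']
             | Some j => pv_idx A s f (S j) ++ [k']
             end
      end
    end
  end.

Fixpoint index_of (x : nat) (l : list nat) : option nat :=
  match l with
  | [] => None
  | y :: r => if Nat.eqb x y then Some 0 else option_map S (index_of x r)
  end.

(** Re-indexing of a pointer into the subsequence [idx]; a pointer to an
    occurrence not kept is sent to the occurrence itself ([self]), which is
    not an "earlier" occurrence, so the result is then not a justified
    sequence. *)
Definition remap (idx : list nat) (self j : nat) : nat :=
  match index_of j idx with Some i => i | None => self end.

Definition adj_occ (idx : list nat) (i : nat) (o : occ) : occ :=
  mkOcc (o_move o) (option_map (remap idx i) (o_just o))
        (map (option_map (fun p => (remap idx i (fst p), snd p))) (o_mu o))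
        (o_inst o).

Definition restrict (s : list occ) (idx : list nat) : list occ :=
  map (fun ip => adj_occ idx (fst ip) (nth (snd ip) s dummy_occ))
      (combine (seq 0 (length idx)) idx).

Definition preview (A : arena) (s : list occ) : list occ :=
  restrict s (pv_idx A s (length s) (length s)).

(** Canonical O-renaming sending the i-th element of [L] to o_i
    (injective when [L] has no duplicates). *)
Definition canon (L : list nat) (x : nat) : nat :=
  match index_of x L with Some i => i | None => length L + x end.

Definition view (A : arena) (s : list occ) : list occ :=
  let v := preview A s in ren_seq (canon (O_ovars A v)) v.

Inductive vclosure (A : arena) (S : list occ -> Prop) : list occ -> Prop :=
| vcl_nil : vclosure A S []
| vcl_step s m n :
    vclosure A S s -> play A (s ++ [m; n]) -> S (view A (s ++ [m; n])) ->
    vclosure A S (s ++ [m; n]).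

From Stdlib Require Import List Arith Lia.
From Stdlib Require FinFun.
Import ListNotations.

(* Determinism: if s·m and s·n are in the closure then m and n are Player moves,
   and the pre-views of s·m and s·n consist of a common part, determined by s,
   followed by (a re-indexed copy of) m, resp. n.  Determinism of sigma equates
   the two views, and the last occurrence of a view determines the move: the
   canonical O-renaming is injective, and re-indexing pointers is injective on
   pointers to earlier occurrences.

   Uniformity: an O-renaming maps plays to plays, because atomic labels contain
   no O-variables, so renaming commutes with the substitutions theta; and it does
   not change views, since a view renames its O-variables canonically by order of
   first appearance and every O-variable of a play is played by an O-move. *)

Fixpoint term_list_ind (P : term -> Prop) (Hvar : forall v, P (Var v))
  (Happ : forall f l, Forall P l -> P (App f l)) (t : term) : P t :=
  match t with
  | Var v => Hvar v
  | App f l => Happ f l ((fix go (l : list term) : Forall P l :=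
       match l with
       | [] => Forall_nil _
       | u :: r => Forall_cons _ (term_list_ind P Hvar Happ u) (go r)
       end) l)
  end.

Definition ren_var (r : nat -> nat) (v : var) : var :=
  match v with VO k => VO (r k) | _ => v end.

Lemma fvars_ren_term r t : fvars (ren_term r t) = map (ren_var r) (fvars t).
Proof.
  induction t using term_list_ind.
  - destruct v; reflexivity.
  - simpl. induction H; simpl; auto.
    rewrite map_app, H, IHForall. reflexivity.
Qed.

Lemma map_injective {X Y} (f : X -> Y) : (forall a b, f a = f b -> a = b) ->
  forall l1 l2, map f l1 = map f l2 -> l1 = l2.
Proof.
  intros Hf l1; induction l1; intros [|b l2] E; simpl in E; try discriminate; auto.
  inversion E. f_equal; auto.
Qed.

Lemma ren_term_inj r : O_renaming r ->
  forall t1 t2, ren_term r t1 = ren_term r t2 -> t1 = t2.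
Proof.
  intros Hr t1. induction t1 using term_list_ind; intros t2 E.
  - destruct v, t2 as [w|]; try destruct w; simpl in E; inversion E; subst; auto.
    rewrite (Hr _ _ H0); auto.
  - destruct t2 as [w|g l2]; [destruct w; discriminate|].
    simpl in E. inversion E; subst. f_equal. clear E.
    revert l2 H2. induction H; intros [|b l2] E; simpl in E; try discriminate; auto.
    inversion E. f_equal; auto.
Qed.

Lemma ren_term_comp f g t : ren_term f (ren_term g t) = ren_term (fun x => f (g x)) t.
Proof.
  induction t using term_list_ind.
  - destruct v; reflexivity.
  - simpl. f_equal. rewrite map_map. induction H; simpl; auto. f_equal; auto.
Qed.

Lemma ren_term_ext_in f g t : (forall x, In (VO x) (fvars t) -> f x = g x) ->
  ren_term f t = ren_term g t.
Proof.
  induction t using term_list_ind; intros E.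
  - destruct v; simpl in *; auto. rewrite E; auto.
  - simpl. f_equal. simpl in E. induction H; simpl; auto.
    simpl in E. f_equal.
    + apply H; intros; apply E; apply in_or_app; auto.
    + apply IHForall; intros; apply E; apply in_or_app; auto.
Qed.

Lemma ovars_inst_ren r l : ovars_inst (map (ren_term r) l) = map r (ovars_inst l).
Proof.
  induction l as [|t l IH]; simpl; auto.
  unfold ovars_inst in *. simpl. rewrite IH, map_app.
  destruct t as [[]|]; reflexivity.
Qed.

Lemma index_of_Some x L i :
  index_of x L = Some i -> nth_error L i = Some x /\ i < length L.
Proof.
  revert i; induction L as [|y L IH]; simpl; intros i E; try discriminate.
  destruct (Nat.eqb_spec x y).
  - inversion E; subst; simpl; split; auto; lia.
  - destruct (index_of x L) eqn:E2; simpl in E; inversion E; subst.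
    destruct (IH _ eq_refl); simpl; split; auto; lia.
Qed.

Lemma index_of_In x L : In x L -> exists i, index_of x L = Some i.
Proof.
  induction L as [|y L IH]; simpl; intros H; [contradiction|].
  destruct (Nat.eqb_spec x y); eauto.
  destruct H; [congruence|]. destruct (IH H) as [i Hi]; rewrite Hi; simpl; eauto.
Qed.

Lemma index_of_map r x L : O_renaming r -> index_of (r x) (map r L) = index_of x L.
Proof.
  intros Hr; induction L as [|y L IH]; simpl; auto.
  rewrite IH. destruct (Nat.eqb_spec x y), (Nat.eqb_spec (r x) (r y)); subst; auto.
  - congruence.
  - apply Hr in e; congruence.
Qed.

Lemma canon_O_renaming L : O_renaming (canon L).
Proof.
  intros x y. unfold canon.
  destruct (index_of x L) eqn:Ex, (index_of y L) eqn:Ey; intros E; subst.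
  - apply index_of_Some in Ex; apply index_of_Some in Ey.
    destruct Ex, Ey; congruence.
  - apply index_of_Some in Ex; lia.
  - apply index_of_Some in Ey; lia.
  - lia.
Qed.

Lemma canon_map r L x : O_renaming r -> In x L -> canon (map r L) (r x) = canon L x.
Proof.
  intros Hr Hx. unfold canon. rewrite index_of_map by auto.
  destruct (index_of_In _ _ Hx) as [i Hi]; rewrite Hi; auto.
Qed.

Lemma play_nil A : play A [].
Proof.
  unfold play, jseq. repeat split; intros;
  repeat match goal with H : nth_error [] ?i = _ |- _ => destruct i; discriminate end.
  constructor.
Qed.

Lemma vclosure_even A sigma s : vclosure A sigma s -> Nat.even (length s) = true.
Proof.
  induction 1; auto. rewrite length_app, Nat.add_comm. exact IHvclosure.
Qed.

Lemma vclosure_play A sigma s : vclosure A sigma s -> play A s.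
Proof. induction 1; auto using play_nil. Qed.

Lemma vclosure_prefix A sigma u : vclosure A sigma u -> forall s t, u = s ++ t ->
  Nat.even (length s) = true -> vclosure A sigma s.
Proof.
  induction 1 as [|s m n Hs IH Hp Hv]; intros s0 t E Ev.
  - symmetry in E. apply app_eq_nil in E. destruct E; subst. constructor.
  - destruct (app_eq_app _ _ _ _ E) as [l [[-> _] | [-> El]]]; [eapply IH; eauto|].
    destruct l as [|x [|y [|]]]; inversion El; subst.
    + rewrite app_nil_r; exact Hs.
    + apply vclosure_even in Hs.
      rewrite length_app, Nat.add_1_r, Nat.even_succ, <- Nat.negb_even, Hs in Ev.
      discriminate.
    + constructor; auto.
Qed.

Lemma vclosure_snoc_inv A sigma s x : vclosure A sigma (s ++ [x]) ->
  exists s1 m, s = s1 ++ [m] /\ vclosure A sigma s1 /\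
    play A (s ++ [x]) /\ sigma (view A (s ++ [x])).
Proof.
  intros H. remember (s ++ [x]) as u. destruct H.
  - destruct s; discriminate.
  - assert (E : s ++ [x] = (s0 ++ [m]) ++ [n]) by (rewrite <- app_assoc; auto).
    apply app_inj_tail in E. destruct E as [-> ->]. eauto 6.
Qed.

Definition backward_pointers (u : list occ) : Prop :=
  forall i o j, nth_error u i = Some o -> o_just o = Some j -> j < i.

Lemma jseq_backward_pointers A w : jseq A w -> backward_pointers w.
Proof.
  intros [Hj _] i o j Hn Ho. destruct (Hj _ _ Hn) as [_ [Hp _]].
  destruct (parent A (o_move o)).
  - destruct Hp as [j' [o' [E [L _]]]]. congruence.
  - congruence.
Qed.

Lemma backward_pointers_app u y : backward_pointers (u ++ y) -> backward_pointers u.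
Proof.
  intros H i o j Hn Hj. apply (H i o j); auto.
  rewrite nth_error_app1; auto. apply nth_error_Some; congruence.
Qed.

(* Roots are initial moves (depth 0) and polarities alternate. *)
Lemma play_is_O_even A w : play A w -> forall i o, nth_error w i = Some o ->
  is_O A (o_move o) = Nat.even i.
Proof.
  intros Hp. induction i; intros o Hn.
  - destruct Hp as [[Hj _] _]. destruct (Hj _ _ Hn) as [_ [Hpar _]].
    unfold is_O, depth. simpl.
    destruct (parent A (o_move o)); auto.
    destruct Hpar as [j [o' [_ [L _]]]]. lia.
  - assert (Hlt : i < length w).
    { assert (S i < length w) by (apply nth_error_Some; congruence). lia. }
    destruct (nth_error w i) as [o0|] eqn:E; [|apply nth_error_Some in Hlt; contradiction].
    destruct Hp as [_ [Halt _]]. specialize (Halt _ _ _ E Hn).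
    rewrite Nat.even_succ, <- Nat.negb_even, <- (IHi _ eq_refl).
    destruct (is_O A (o_move o0)), (is_O A (o_move o)); simpl; congruence.
Qed.

Lemma pv_idx_app A u y f k : backward_pointers u -> k <= length u ->
  pv_idx A (u ++ y) f k = pv_idx A u f k.
Proof.
  intros H. revert k. induction f; intros k Hk; simpl; auto.
  destruct k as [|k]; auto.
  rewrite nth_error_app1 by lia.
  destruct (nth_error u k) eqn:E; auto.
  destruct (negb (is_O A (o_move o))).
  - rewrite IHf by lia; auto.
  - destruct (o_just o) eqn:Ej; auto.
    specialize (H _ _ _ E Ej). rewrite IHf by lia. auto.
Qed.

Lemma pv_idx_lt A u f k x : backward_pointers u -> In x (pv_idx A u f k) -> x < k.
Proof.
  intros H. revert k. induction f; intros k Hx; simpl in Hx; [contradiction|].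
  destruct k as [|k]; [contradiction|].
  destruct (nth_error u k) eqn:E; [|contradiction].
  destruct (negb (is_O A (o_move o))).
  - apply in_app_or in Hx; destruct Hx as [Hx|[Hx|[]]]; [apply IHf in Hx|]; lia.
  - destruct (o_just o) eqn:Ej.
    + specialize (H _ _ _ E Ej).
      apply in_app_or in Hx; destruct Hx as [Hx|[Hx|[]]]; [apply IHf in Hx|]; lia.
    + destruct Hx as [Hx|[]]; lia.
Qed.

Lemma combine_app {X Y} (l1 l3 : list X) (l2 l4 : list Y) : length l1 = length l2 ->
  combine (l1 ++ l3) (l2 ++ l4) = combine l1 l2 ++ combine l3 l4.
Proof.
  revert l2; induction l1; intros [|b l2] E; simpl in *; try discriminate; auto.
  rewrite IHl1; auto.
Qed.

Definition pv_pos (A : arena) (u : list occ) : list nat :=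
  pv_idx A u (length u) (length u).

(* The pre-view of [u ++ [x]] for a Player move [x] is [preview_init A u]
   followed by [x]; the former does not depend on [x]. *)
Definition preview_init (A : arena) (u : list occ) : list occ :=
  map (fun ip => adj_occ (pv_pos A u ++ [length u]) (fst ip) (nth (snd ip) u dummy_occ))
      (combine (seq 0 (length (pv_pos A u))) (pv_pos A u)).

Lemma length_preview_init A u : length (preview_init A u) = length (pv_pos A u).
Proof. unfold preview_init. rewrite length_map, length_combine, length_seq. lia. Qed.

Lemma preview_snoc_P A u x : backward_pointers u -> is_O A (o_move x) = false ->
  preview A (u ++ [x]) =
  preview_init A u ++ [adj_occ (pv_pos A u ++ [length u]) (length (pv_pos A u)) x].
Proof.
  intros H Hx. unfold preview. rewrite length_app, Nat.add_1_r.
  cbn [pv_idx]. rewrite nth_error_app2, Nat.sub_diag by lia. simpl nth_error.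
  cbv iota beta. rewrite Hx. simpl negb. cbv iota. rewrite pv_idx_app by auto.
  fold (pv_pos A u).
  unfold restrict, preview_init. rewrite length_app, Nat.add_1_r, seq_S.
  rewrite combine_app, map_app by (rewrite length_seq; auto). f_equal.
  - apply map_ext_in. intros [i j] Hin. simpl. f_equal.
    apply in_combine_r, pv_idx_lt in Hin; auto.
    rewrite app_nth1; auto.
  - simpl. rewrite app_nth2, Nat.sub_diag by lia. reflexivity.
Qed.

Lemma O_ovars_app A l1 l2 : O_ovars A (l1 ++ l2) = O_ovars A l1 ++ O_ovars A l2.
Proof. apply flat_map_app. Qed.

Lemma view_snoc_P A u x : backward_pointers u -> is_O A (o_move x) = false ->
  let c := canon (O_ovars A (preview_init A u)) in
  view A (u ++ [x]) = ren_seq c (preview_init A u) ++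
     [ren_occ c (adj_occ (pv_pos A u ++ [length u]) (length (pv_pos A u)) x)].
Proof.
  intros H Hx. unfold view. rewrite preview_snoc_P by auto.
  rewrite O_ovars_app. unfold O_ovars at 2. simpl. rewrite Hx, !app_nil_r.
  unfold ren_seq. rewrite map_app. reflexivity.
Qed.

Lemma remap_inj idx i j1 j2 :
  remap idx i j1 = remap idx i j2 -> remap idx i j1 < i -> j1 = j2.
Proof.
  unfold remap. destruct (index_of j1 idx) eqn:E1; [|lia].
  destruct (index_of j2 idx) eqn:E2; intros E L; subst; [|lia].
  apply index_of_Some in E1; apply index_of_Some in E2. destruct E1, E2; congruence.
Qed.

Lemma map_remap_mu_inj idx i la lb :
  let f := option_map (fun p : nat * nat => (remap idx i (fst p), snd p)) in
  map f la = map f lb ->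
  (forall k j l, nth_error (map f la) k = Some (Some (j, l)) -> j < i) -> la = lb.
Proof.
  intros f. revert lb; induction la as [|a la IH]; intros [|b lb] E Hk;
    simpl in E; try discriminate; auto.
  inversion E as [[Eh Et]]. f_equal.
  - destruct a as [[j l]|], b as [[j' l']|]; simpl in Eh; try discriminate; auto.
    inversion Eh. assert (remap idx i j < i) by (apply (Hk 0 _ l); reflexivity).
    f_equal. f_equal; auto. eapply remap_inj; eauto.
  - apply IH; auto. intros k j l Hn. exact (Hk (S k) j l Hn).
Qed.

(* Re-indexing is injective on the pointers of the last occurrence of a justified
   sequence, since they point to earlier (hence kept) occurrences. *)
Lemma ren_adj_occ_last_inj A v i idx c a b : O_renaming c -> length v = i ->
  jseq A (v ++ [ren_occ c (adj_occ idx i a)]) ->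
  ren_occ c (adj_occ idx i a) = ren_occ c (adj_occ idx i b) -> a = b.
Proof.
  intros Hc <- [Hj _] E.
  assert (Hn : nth_error (v ++ [ren_occ c (adj_occ idx (length v) a)]) (length v)
               = Some (ren_occ c (adj_occ idx (length v) a))).
  { rewrite nth_error_app2, Nat.sub_diag by lia. reflexivity. }
  destruct (Hj _ _ Hn) as [_ [Hpar [_ [Hmu _]]]].
  destruct a as [ma ja mua ia], b as [mb jb mub ib].
  unfold ren_occ, adj_occ in E, Hpar, Hmu; simpl in E, Hpar, Hmu.
  inversion E as [[Em Ej Emu Ei]]. subst mb.
  assert (ja = jb) as <-.
  { destruct ja as [ja|], jb as [jb|]; simpl in Ej; try discriminate; auto.
    inversion Ej. f_equal. destruct (parent A ma).
    - destruct Hpar as [j [o' [Hj1 [Hj2 _]]]]. inversion Hj1; subst.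
      eapply remap_inj; eauto.
    - discriminate. }
  assert (mua = mub) as <-.
  { eapply map_remap_mu_inj; eauto. intros k j l Hk. eapply Hmu; eauto. }
  assert (ia = ib) as <-.
  { eapply map_injective; [|exact Ei]. apply ren_term_inj; auto. }
  reflexivity.
Qed.

Lemma view_function_det_P A sigma u a b : view_function A sigma ->
  play A (u ++ [a]) -> play A (u ++ [b]) -> Nat.even (length u) = false ->
  sigma (view A (u ++ [a])) -> sigma (view A (u ++ [b])) -> a = b.
Proof.
  intros [_ [Hv [_ Hdet]]] Pa Pb Ev Sa Sb.
  assert (Hu : backward_pointers u).
  { apply (backward_pointers_app u [a]), (jseq_backward_pointers A), Pa. }
  assert (Hlast : forall x, play A (u ++ [x]) -> is_O A (o_move x) = false).
  { intros x Px. rewrite (play_is_O_even A _ Px (length u) x); auto.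
    rewrite nth_error_app2, Nat.sub_diag by lia; reflexivity. }
  rewrite view_snoc_P in Sa, Sb by auto.
  assert (E := Hdet _ _ _ Sa Sb).
  destruct (Hv _ Sa) as [[[Hj _] _] _].
  eapply ren_adj_occ_last_inj; [apply canon_O_renaming | | exact Hj | exact E].
  unfold ren_seq. rewrite length_map. apply length_preview_init.
Qed.

Lemma vclosure_deterministic A sigma s m n : view_function A sigma ->
  vclosure A sigma (s ++ [m]) -> vclosure A sigma (s ++ [n]) -> m = n.
Proof.
  intros Hvf Hm Hn.
  destruct (vclosure_snoc_inv _ _ _ _ Hm) as [s1 [m1 [-> [Hs1 [Pm Sm]]]]].
  destruct (vclosure_snoc_inv _ _ _ _ Hn) as [_ [_ [_ [_ [Pn Sn]]]]].
  eapply view_function_det_P; eauto.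
  rewrite length_app, Nat.add_1_r, Nat.even_succ, <- Nat.negb_even.
  rewrite (vclosure_even _ _ _ Hs1). reflexivity.
Qed.

Lemma nth_error_ren_seq r w i :
  nth_error (ren_seq r w) i = option_map (ren_occ r) (nth_error w i).
Proof. apply nth_error_map. Qed.

Lemma nth_error_ren_seq_inv r w i o : nth_error (ren_seq r w) i = Some o ->
  exists o0, o = ren_occ r o0 /\ nth_error w i = Some o0.
Proof.
  rewrite nth_error_ren_seq. destruct (nth_error w i); intros E; inversion E; eauto.
Qed.

Lemma O_ovars_ren A r v : O_ovars A (ren_seq r v) = map r (O_ovars A v).
Proof.
  induction v as [|o v IH]; auto.
  unfold O_ovars in *; simpl. rewrite IH, map_app. f_equal.
  destruct (is_O A (o_move o)); auto. apply ovars_inst_ren.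
Qed.

Definition ren_binding (r : nat -> nat) (p : nat * term) : nat * term :=
  (fst p, ren_term r (snd p)).

Lemma combine_map_ren_term (l : list nat) (l' : list term) r :
  combine l (map (ren_term r) l') = map (ren_binding r) (combine l l').
Proof.
  revert l'; induction l; intros [|b l']; simpl; auto. rewrite IHl; auto.
Qed.

Lemma theta_f_ren A r w f i :
  theta_f A (ren_seq r w) f i = map (ren_binding r) (theta_f A w f i).
Proof.
  revert i; induction f; intros i; simpl; auto.
  rewrite nth_error_ren_seq. destruct (nth_error w i); simpl; auto.
  rewrite map_app, combine_map_ren_term. f_equal.
  destruct (o_just o); auto.
Qed.

Lemma lookup_ren r x th :
  lookup x (map (ren_binding r) th) = option_map (ren_term r) (lookup x th).
Proof.
  induction th as [|[y u] th IH]; simpl; auto. destruct (Nat.eqb x y); auto.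
Qed.

(* The O-variables of [subst th t] all come from [th] because [t] has none. *)
Lemma subst_ren r th t :
  AP_term t -> subst (map (ren_binding r) th) t = ren_term r (subst th t).
Proof.
  induction t using term_list_ind; intros Hap.
  - destruct v; simpl; auto.
    + rewrite lookup_ren. destruct (lookup x th); auto.
    + exfalso. apply (Hap (VO x)). simpl; auto.
  - simpl. f_equal. rewrite map_map. induction H; simpl; auto. f_equal.
    + apply H. intros v Hv. apply Hap. simpl. apply in_or_app; auto.
    + apply IHForall. intros v Hv. apply Hap. simpl. apply in_or_app; auto.
Qed.

Lemma jseq_ren A r w : O_renaming r -> jseq A w -> jseq A (ren_seq r w).
Proof.
  intros Hr [Hj Hnd]. split; [|rewrite O_ovars_ren; apply FinFun.Injective_map_NoDup; auto].
  intros i o Hn. destruct (nth_error_ren_seq_inv _ _ _ _ Hn) as [o0 [-> E]].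
  destruct (Hj _ _ E) as [Hm [Hpar [Hlmu [Hmu [Hlinst Hinst]]]]]. simpl.
  split; [exact Hm|]. split.
  { destruct (parent A (o_move o0)); auto.
    destruct Hpar as [j [o' [Ej [Lj [Ej' Em]]]]].
    exists j, (ren_occ r o'). rewrite nth_error_ren_seq, Ej'. auto. }
  split; [exact Hlmu|]. split.
  { intros k j l Hk. destruct (Hmu k j l Hk) as [Hjl [o' [E' [P L]]]].
    split; auto. exists (ren_occ r o'). rewrite nth_error_ren_seq, E'. auto. }
  split; [rewrite length_map; auto|].
  destruct (is_O A (o_move o0)); intros t Ht;
    apply in_map_iff in Ht; destruct Ht as [t0 [<- Ht0]].
  - destruct (Hinst t0 Ht0) as [k ->]. exists (r k). reflexivity.
  - intros v Hv. rewrite fvars_ren_term in Hv.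
    apply in_map_iff in Hv. destruct Hv as [v0 [<- Hv0]].
    specialize (Hinst _ Ht0 v0 Hv0). destruct v0; simpl; auto.
Qed.

Lemma play_ren A r w : wf_arena A -> O_renaming r -> play A w -> play A (ren_seq r w).
Proof.
  intros [_ [_ Hwf]] Hr [Hjs [Halt [HOmu [HPmu [Hmu Hov]]]]].
  assert (Hj := proj1 Hjs).
  refine (conj (jseq_ren A r w Hr Hjs) (conj _ (conj _ (conj _ (conj _ _))))).
  - intros i o o' Hn Hn'.
    destruct (nth_error_ren_seq_inv _ _ _ _ Hn) as [o0 [-> E]].
    destruct (nth_error_ren_seq_inv _ _ _ _ Hn') as [o1 [-> E']].
    simpl. exact (Halt _ _ _ E E').
  - intros i o Hn HO x Hx.
    destruct (nth_error_ren_seq_inv _ _ _ _ Hn) as [o0 [-> E]]. exact (HOmu _ _ E HO x Hx).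
  - intros i o Hn HO x Hx.
    destruct (nth_error_ren_seq_inv _ _ _ _ Hn) as [o0 [-> E]]. exact (HPmu _ _ E HO x Hx).
  - intros i o k j l o' a b Hn Hk Hn' Ha Hb.
    destruct (nth_error_ren_seq_inv _ _ _ _ Hn) as [o0 [-> E]].
    destruct (nth_error_ren_seq_inv _ _ _ _ Hn') as [o1 [-> E']].
    simpl in *. destruct (Hmu _ _ _ _ _ _ _ _ E Hk E' Ha Hb) as [Hpr Heq].
    split; [exact Hpr|].
    unfold theta in *. rewrite !theta_f_ren.
    rewrite (map_ext_in _ (fun t => ren_term r (subst (theta_f A w (S i) i) t)) (a_args a)).
    2:{ intros t Ht. apply subst_ren.
        eapply Hwf; [apply (Hj _ _ E) | eapply nth_error_In; exact Ha | exact Ht]. }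
    rewrite (map_ext_in _ (fun t => ren_term r (subst (theta_f A w (S j) j) t)) (a_args b)).
    2:{ intros t Ht. apply subst_ren.
        eapply Hwf; [apply (Hj _ _ E') | eapply nth_error_In; exact Hb | exact Ht]. }
    rewrite <- (map_map (subst (theta_f A w (S i) i)) (ren_term r)).
    rewrite <- (map_map (subst (theta_f A w (S j) j)) (ren_term r)).
    rewrite Heq. reflexivity.
  - intros i o t x Hn HP Ht Hx.
    destruct (nth_error_ren_seq_inv _ _ _ _ Hn) as [o0 [-> E]]. simpl in *.
    apply in_map_iff in Ht. destruct Ht as [t0 [<- Ht0]].
    rewrite fvars_ren_term in Hx. apply in_map_iff in Hx. destruct Hx as [v0 [Ev Hv0]].
    destruct v0; simpl in Ev; inversion Ev; subst.
    destruct (Hov _ _ _ _ E HP Ht0 Hv0) as [j [o' [Lj [Ej [HO' Hin]]]]].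
    exists j, (ren_occ r o'). rewrite nth_error_ren_seq, Ej. simpl.
    rewrite ovars_inst_ren. repeat split; auto. apply in_map; auto.
Qed.

Lemma pv_idx_ren A r w f k : pv_idx A (ren_seq r w) f k = pv_idx A w f k.
Proof.
  revert k; induction f; intros k; simpl; auto.
  destruct k; auto. rewrite nth_error_ren_seq. destruct (nth_error w k); simpl; auto.
  rewrite !IHf. destruct (o_just o); rewrite ?IHf; reflexivity.
Qed.

Lemma restrict_ren r w idx : restrict (ren_seq r w) idx = ren_seq r (restrict w idx).
Proof.
  unfold restrict, ren_seq. rewrite map_map. apply map_ext. intros [i j]. simpl.
  change (adj_occ idx i (nth j (map (ren_occ r) w) (ren_occ r dummy_occ))
          = ren_occ r (adj_occ idx i (nth j w dummy_occ))).
  rewrite map_nth. reflexivity.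
Qed.

Lemma preview_ren A r w : preview A (ren_seq r w) = ren_seq r (preview A w).
Proof.
  unfold preview. rewrite restrict_ren, pv_idx_ren.
  unfold ren_seq at 2 3. rewrite length_map. reflexivity.
Qed.

Lemma play_ovars_played A w o t x : play A w -> In o w -> In t (o_inst o) ->
  In (VO x) (fvars t) -> In x (O_ovars A w).
Proof.
  intros Hp Ho Ht Hx.
  assert (Hplayed : forall o', In o' w -> is_O A (o_move o') = true ->
            In x (ovars_inst (o_inst o')) -> In x (O_ovars A w)).
  { intros o' Ho' HO Hin. apply in_flat_map. exists o'. rewrite HO. auto. }
  destruct (In_nth_error _ _ Ho) as [i Hi].
  destruct (is_O A (o_move o)) eqn:HO.
  - destruct Hp as [[Hj _] _]. destruct (Hj _ _ Hi) as [_ [_ [_ [_ [_ Hinst]]]]].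
    rewrite HO in Hinst. destruct (Hinst t Ht) as [k ->].
    destruct Hx as [Hx|[]]. inversion Hx; subst.
    apply (Hplayed o); auto. apply in_flat_map. exists (Var (VO x)). simpl; auto.
  - destruct Hp as [_ [_ [_ [_ [_ Hov]]]]].
    destruct (Hov _ _ _ _ Hi HO Ht Hx) as [j [o' [_ [Ej [HO' Hin]]]]].
    apply (Hplayed o'); auto. eapply nth_error_In; eauto.
Qed.

Lemma view_ren A r w : O_renaming r -> play A (view A w) -> view A (ren_seq r w) = view A w.
Proof.
  intros Hr Hp. unfold view in *. rewrite preview_ren, O_ovars_ren.
  set (v := preview A w) in *. set (c := canon (O_ovars A v)) in Hp.
  unfold ren_seq. rewrite map_map. apply map_ext_in. intros o Ho.
  unfold ren_occ; simpl. f_equal. rewrite map_map. apply map_ext_in. intros t Ht.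
  rewrite ren_term_comp. apply ren_term_ext_in. intros x Hx. apply canon_map; auto.
  assert (Hcx : In (c x) (O_ovars A (ren_seq c v))).
  { apply (play_ovars_played A _ (ren_occ c o) (ren_term c t)); auto.
    - apply in_map; auto.
    - apply in_map; auto.
    - rewrite fvars_ren_term. apply in_map_iff. exists (VO x). auto. }
  rewrite O_ovars_ren in Hcx. apply in_map_iff in Hcx. destruct Hcx as [y [Ey Hy]].
  apply canon_O_renaming in Ey. subst. exact Hy.
Qed.

Lemma vclosure_ren A sigma r s : wf_arena A -> view_function A sigma -> O_renaming r ->
  vclosure A sigma s -> vclosure A sigma (ren_seq r s).
Proof.
  intros Hwf [_ [Hv _]] Hr Hs. induction Hs as [|u m n Hu IH Hp Hsig]; [constructor|].
  assert (E : ren_seq r (u ++ [m; n]) = ren_seq r u ++ [ren_occ r m; ren_occ r n])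
    by apply map_app.
  rewrite E. apply vcl_step; auto; rewrite <- E.
  - apply play_ren; auto.
  - rewrite view_ren; auto. apply (Hv _ Hsig).
Qed.

Theorem mainTheorem7 (A : arena) (sigma : list occ -> Prop) :
  wf_arena A -> view_function A sigma -> strategy A (vclosure A sigma).
Proof.
  intros Hwf Hvf. split; [|split; [|split; [|split]]].
  - exists []. constructor.
  - intros s Hs. exact (conj (vclosure_play _ _ _ Hs) (vclosure_even _ _ _ Hs)).
  - intros s t Hst Ev. exact (vclosure_prefix _ _ _ Hst s t eq_refl Ev).
  - intros s m n. exact (vclosure_deterministic A sigma s m n Hvf).
  - intros s r Hr. exact (vclosure_ren A sigma r s Hwf Hvf Hr).
Qed.
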